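(* In $Y_R(\mathfrak{so}_3)$, writing $e_{-1,0}(u)=\sum_{r\ge1}e^{(r)}_{-1,0}u^{-r}$, $$e_{-1,1}(u)=[e^{(1)}_{-1,0},e_{-1,0}(u)]-e_{-1,0}(u)^2.$$
   Context: Let $e_{ij}$ ($i,j\in\{-1,0,1\}$) be the matrix units of $\mathrm{End}\,\mathbb{C}^3$, with rows and columns indexed by $-1,0,1$. Let $P=\sum_{i,j}e_{ij}\otimes e_{ji}$, $Q=\sum_{i,j}e_{ij}\otimes e_{-i,-j}$ and $R(u)=1-\frac{P}{u}+\frac{Q}{u-\frac12}$. Let $t$ be the transposition on $\mathrm{End}\,\mathbb{C}^3$ given by $(e_{ij})^t=e_{-j,-i}$. The algebra $Y_R(\mathfrak{so}_3)$ is the unital associative algebra over $\mathbb{C}$ generated by elements $t_{ij}^{(r)}$, $r\ge 1$, $i,j\in\{-1,0,1\}$; put $t_{ij}(u)=\delta_{ij}+\sum_{r\ge1}t^{(r)}_{ij}u^{-r}$, $T(u)=\sum_{i,j}t_{ij}(u)\otimes e_{ij}$, $T^t(u)=\sum_{i,j}t_{ij}(u)\otimes e_{-j,-i}$, $T_1(u)=\sum t_{ij}(u)\otimes e_{ij}\otimes 1$, $T_2(v)=\sum t_{ij}(v)\otimes 1\otimes e_{ij}$. The defining relations are $R(u-v)T_1(u)T_2(v)=T_2(v)T_1(u)R(u-v)$ and $T(u)T^t(u+\frac12)=T^t(u+\frac12)T(u)=1$. The Gauss generators are the unique series $k_i(u)\in 1+u^{-1}Y_R(\mathfrak{so}_3)[[u^{-1}]]$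 ($i=-1,0,1$) and $e_{ij}(u),f_{ji}(u)\in u^{-1}Y_R(\mathfrak{so}_3)[[u^{-1}]]$ ($-1\le i<j\le1$) such that $T(u)=F(u)K(u)E(u)$, where $F(u)$ is the lower unitriangular matrix with below-diagonal entries $F_{0,-1}=f_{0,-1}(u)$, $F_{1,-1}=f_{1,-1}(u)$, $F_{1,0}=f_{1,0}(u)$, $K(u)=\mathrm{diag}(k_{-1}(u),k_0(u),k_1(u))$, and $E(u)$ is the upper unitriangular matrix with above-diagonal entries $E_{-1,0}=e_{-1,0}(u)$, $E_{-1,1}=e_{-1,1}(u)$, $E_{0,1}=e_{01}(u)$ (rows/columns indexed by $-1,0,1$). *)

From HB Require Import structures.
From mathcomp Require Import all_boot all_order all_algebra.
Set Implicit Arguments. Unset Strict Implicit. Unset Printing Implicit Defensive.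
Import Order.TTheory GRing.Theory Num.Theory.
Local Open Scope ring_scope.

(* Index set {-1,0,1} is encoded as 'I_3 via k |-> k-1, so the natural
   order on 'I_3 is the order -1 < 0 < 1 and  -i  is rev_ord i. *)
Definition im1 : 'I_3 := @Ordinal 3 0 isT.
Definition i0  : 'I_3 := @Ordinal 3 1 isT.
Definition ip1 : 'I_3 := @Ordinal 3 2 isT.
Definition ineg (i : 'I_3) : 'I_3 := rev_ord i.

Section Defs.
Variables (F : numFieldType) (A : lalgType F).

(* Formal power series in u^{-1}: s n = coefficient of u^{-n}. *)
Definition ser := nat -> A.

Definition sconv (x y : ser) : ser :=
  fun n => \sum_(i < n.+1) x i * y (n - i)%N.

Definition halfF : F := 2^-1.

(* s(u) |-> s(u + 1/2), re-expanded in u^{-1}: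
   (u+1/2)^{-r} = sum_k (-1/2)^k binom(r+k-1,k) u^{-r-k}. *)
Definition shiftHalf (s : ser) : ser :=
  fun n => if n is 0 then s 0%N else
    \sum_(1 <= r < n.+1) (((- halfF) ^+ (n - r) * ('C(n.-1, n - r))%:R) *: s r).

Definition Tser (t : 'I_3 -> 'I_3 -> nat -> A) (i j : 'I_3) : ser :=
  fun n => if n is 0 then (i == j)%:R else t i j n.

(* Series in two variables u^{-1}, v^{-1}, with finitely many extra
   positive powers allowed: X m n = coefficient of u^{-m} v^{-n}. *)
Definition biser := int -> int -> A.

(* multiplication by (u - v) *)
Definition mul_uv (X : biser) : biser :=
  fun m n => X (m + 1)%R n - X m (n + 1)%R.

(* x(u) y(v) and y(v) x(u) *)
Definition prodUV (x y : ser) : biser :=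
  fun m n => if (0 <= m) && (0 <= n) then x `|m|%N * y `|n|%N else 0.
Definition prodVU (y x : ser) : biser :=
  fun m n => if (0 <= m) && (0 <= n) then y `|n|%N * x `|m|%N else 0.

(* The (e_xy (x) e_zw)-entry of  Rt(u,v) = (u-v)(u-v-1/2) R(u-v)
   = (u-v)(u-v-1/2) 1 - (u-v-1/2) P + (u-v) Q,  acting (by scalar
   multiplication) on a two-variable series X. *)
Definition Rop (x y z w : 'I_3) (X : biser) : biser :=
  fun m n =>
    (if (x == y) && (z == w) then
       mul_uv (mul_uv X) m n - halfF *: mul_uv X m n else 0)
  - (if (x == w) && (y == z) then mul_uv X m n - halfF *: X m n else 0)
  + (if (z == ineg x) && (w == ineg y) then mul_uv X m n else 0).

(* RTT relation R(u-v)T1(u)T2(v) = T2(v)T1(u)R(u-v), cleared of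
   denominators, compared entrywise (e_ab (x) e_cd) and coefficientwise. *)
Definition RTT_rel (t : 'I_3 -> 'I_3 -> nat -> A) : Prop :=
  forall (a b c d : 'I_3) (m n : int),
    \sum_(j < 3) \sum_(l < 3) Rop a j c l (prodUV (Tser t j b) (Tser t l d)) m n
  = \sum_(j < 3) \sum_(l < 3) Rop j b l d (prodVU (Tser t c l) (Tser t a j)) m n.

(* T(u) T^t(u+1/2) = T^t(u+1/2) T(u) = 1, where (T^t)_{ab} = t_{-b,-a}. *)
Definition unitary_rel (t : 'I_3 -> 'I_3 -> nat -> A) : Prop :=
  forall (a b : 'I_3) (n : nat),
    \sum_(c < 3) sconv (Tser t a c) (shiftHalf (Tser t (ineg b) (ineg c))) n
      = ((a == b) && (n == 0%N))%:R
 /\ \sum_(c < 3) sconv (shiftHalf (Tser t (ineg c) (ineg a))) (Tser t c b) n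
      = ((a == b) && (n == 0%N))%:R.

Definition Fmat (f : 'I_3 -> 'I_3 -> ser) (a c : 'I_3) : ser :=
  fun n => if a == c then (n == 0%N)%:R else if (c < a)%N then f a c n else 0.
Definition Emat (e : 'I_3 -> 'I_3 -> ser) (c b : 'I_3) : ser :=
  fun n => if c == b then (n == 0%N)%:R else if (c < b)%N then e c b n else 0.

(* Gauss decomposition T(u) = F(u) K(u) E(u), with k_i in 1 + u^{-1}A[[u^{-1}]]
   and e_ij, f_ji in u^{-1}A[[u^{-1}]] for i < j. *)
Definition gauss (t : 'I_3 -> 'I_3 -> nat -> A) (k : 'I_3 -> ser)
    (e f : 'I_3 -> 'I_3 -> ser) : Prop :=
  (forall i, k i 0%N = 1)
  /\ (forall i j : 'I_3, (i < j)%N -> e i j 0%N = 0 /\ f j i 0%N = 0)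
  /\ (forall (a b : 'I_3) (n : nat),
        Tser t a b n = \sum_(c < 3) sconv (sconv (Fmat f a c) (k c)) (Emat e c b) n).

End Defs.

(* Comparing the coefficients of u^{-N} v^{1} in the RTT relation
   gives the commutation relations of the first-order generators t^(1)_cd with
   the series t_ab(u):
     t_ab(u) t^(1)_cd + d_ad t_cb(u) - d_{c,-a} t_{-d,b}(u)
       = t^(1)_cd t_ab(u) + d_cb t_ad(u) - d_{d,-b} t_{a,-c}(u).
   On the other hand the Gauss decomposition, F(u) being lower unitriangular,
   gives for the first row  t_{-1,b}(u) = k_{-1}(u) e_{-1,b}(u); in particular
   t^(1)_{-1,0} = e^(1)_{-1,0} =: x.  The two instances
     [x, t_{-1,0}(u)] = t_{-1,1}(u)   and   [x, t_{-1,-1}(u)] = - t_{-1,0}(u)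
   then read  [x, k e] = k e'  and  [x, k] = - k e  (k = k_{-1}, e = e_{-1,0},
   e' = e_{-1,1}).  Since [x, _] is a derivation,  k e' = [x, k] e + k [x, e]
   = k ([x, e] - e^2), and k, having constant term 1, can be cancelled. *)

From HB Require Import structures.
From mathcomp Require Import all_boot all_order all_algebra.
Import Order.TTheory GRing.Theory Num.Theory.
Local Open Scope ring_scope.
Set Implicit Arguments. Unset Strict Implicit.

Section SeriesAlgebra.
Variables (F : numFieldType) (A : lalgType F).
Implicit Types (x y z : ser A) (a : A).

Definition sdelta : ser A := fun m => (m == 0%N)%:R.

Definition cmt a x : ser A := fun m => a * x m - x m * a.

Lemma sconv_rev x y n : sconv x y n = \sum_(i < n.+1) x (n - i)%N * y i.
Proof.
rewrite /sconv (reindex_inj rev_ord_inj) /=.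
by apply: eq_bigr => i _; rewrite (sub_ordK i).
Qed.

Lemma eq_sconv x x' y y' n : (forall m, x m = x' m) -> (forall m, y m = y' m) ->
  sconv x y n = sconv x' y' n.
Proof. by move=> ex ey; apply: eq_bigr => i _; rewrite ex ey. Qed.

(* Associativity of the Cauchy product: both sides sum x_i y_j z_k over
   i + j + k = n. *)
Lemma sconvA x y z n : sconv x (sconv y z) n = sconv (sconv x y) z n.
Proof.
rewrite [RHS]sconv_rev.
pose c i j := x i * (y (n - i - j)%N * z j).
transitivity (\sum_(i < n.+1) \sum_(j < n.+1 | (j <= n - i)%N) c i j).
  apply: eq_bigr => /= i _; rewrite sconv_rev big_distrr /=.
  by rewrite (big_ord_narrow_leq (leq_subr _ _)).
rewrite (exchange_big_dep predT) //=; apply: eq_bigr => j _.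
transitivity (\sum_(i < n.+1 | (i <= n - j)%N) c i j).
  apply: eq_bigl => i; rewrite -ltnS -(ltnS i) -!subSn ?leq_ord //.
  by rewrite -subn_gt0 -(subn_gt0 i) -!subnDA addnC.
rewrite (big_ord_narrow_leq (leq_subr _ _)) /sconv big_distrl /=.
by apply: eq_bigr => i _; rewrite /c -!subnDA addnC mulrA.
Qed.

Lemma sconv1l x n : sconv sdelta x n = x n.
Proof.
rewrite /sconv big_ord_recl mul1r subn0 big1 ?addr0 // => i _.
by rewrite mul0r.
Qed.

Lemma sconv1r x n : sconv x sdelta n = x n.
Proof.
rewrite sconv_rev big_ord_recl mulr1 subn0 big1 ?addr0 // => i _.
by rewrite mulr0.
Qed.

Lemma sconv0l y n : sconv (fun _ => 0) y n = 0.
Proof. by rewrite /sconv big1 // => i _; rewrite mul0r. Qed.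

Lemma sconvNl x y n : sconv (fun m => - x m) y n = - sconv x y n.
Proof. by rewrite /sconv -sumrN; apply: eq_bigr => i _; rewrite mulNr. Qed.

Lemma sconvBr x y z n :
  sconv x (fun m => y m - z m) n = sconv x y n - sconv x z n.
Proof. by rewrite /sconv -sumrB; apply: eq_bigr => i _; rewrite mulrBr. Qed.

Lemma cmt_sconv a x y n :
  cmt a (sconv x y) n = sconv (cmt a x) y n + sconv x (cmt a y) n.
Proof.
rewrite /cmt /sconv mulr_sumr mulr_suml -sumrB -big_split /=.
by apply: eq_bigr => i _; rewrite mulrBl mulrBr !mulrA addrA subrK.
Qed.

Lemma sconv_cancel (w x y : ser A) n : w 0%N = 1 ->
  (forall m, sconv w x m = sconv w y m) -> x n = y n.
Proof.
move=> w0 eq_wxy; elim/ltn_ind: n => n IH.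
have := eq_wxy n; rewrite /sconv !big_ord_recl w0 !mul1r !subn0.
under eq_bigr => i _ do rewrite IH ?subnSK ?leq_subr //.
by move/addIr.
Qed.

End SeriesAlgebra.

Lemma inegK : involutive ineg.
Proof. exact: rev_ordK. Qed.

Lemma ineg_m1 : ineg im1 = ip1.
Proof. exact: val_inj. Qed.

Lemma ineg_0 : ineg i0 = i0.
Proof. exact: val_inj. Qed.

Lemma sum2_pick (V : nmodType) (I : finType) (H : I -> I -> V) (P : I -> I -> bool) p q :
  (forall j l, P j l = (j == p) && (l == q)) ->
  \sum_j \sum_l (if P j l then H j l else 0) = H p q.
Proof.
move=> eP; rewrite (bigD1 p) //= [X in _ + X]big1 => [|j njp]; last first.
  by rewrite big1 // => l _; rewrite eP (negbTE njp).
rewrite addr0 (bigD1 q) //= [X in _ + X]big1 => [|l nlq]; last first.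
  by rewrite eP (negbTE nlq) andbF.
by rewrite eP !eqxx addr0.
Qed.

Lemma sum2_antidiag (V : nmodType) (H : 'I_3 -> 'I_3 -> V) (P : 'I_3 -> 'I_3 -> bool) b :
  (forall j l, P j l = b && (l == ineg j)) ->
  \sum_(j < 3) \sum_(l < 3) (if P j l then H j l else 0)
  = if b then \sum_(j < 3) H j (ineg j) else 0.
Proof.
case: b => eP; last by rewrite big1 // => j _; rewrite big1 // => l _; rewrite eP.
apply: eq_bigr => j _; rewrite (bigD1 (ineg j)) //= eP eqxx big1 ?addr0 // => l nl.
by rewrite eP (negbTE nl).
Qed.

Lemma sum_delta_ineg (R : pzRingType) (x : 'I_3 -> R) d :
  \sum_(j < 3) x j * (ineg j == d)%:R = x (ineg d).
Proof.
rewrite (bigD1 (ineg d)) //= inegK eqxx mulr1 big1 ?addr0 // => j njd.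
by rewrite (can2_eq inegK inegK) (negbTE njd) mulr0.
Qed.

Lemma sum_delta_inegl (R : pzRingType) (x : 'I_3 -> R) c :
  \sum_(j < 3) (c == ineg j)%:R * x j = x (ineg c).
Proof.
rewrite (bigD1 (ineg c)) //= inegK eqxx mul1r big1 ?addr0 // => j njc.
by rewrite eq_sym (can2_eq inegK inegK) (negbTE njc) mul0r.
Qed.

Section FirstOrderCommutators.
Variables (F : numFieldType) (A : lalgType F).

(* The coefficient of u^{-N} v^{1} in the entry (e_xy (x) e_zw) of
   (u-v)(u-v-1/2) R(u-v) X(u,v), for X without a v^{1} term.  The first
   summand does not depend on the position of y and w; it cancels from both
   sides of the RTT relation. *)
Lemma Rop_at_v1 (X : biser A) x y z w (N : nat) : (forall m, X m (-1) = 0) ->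
  Rop x y z w X N (-1) =
    (if (x == y) && (z == w) then halfF F *: X N 0 - X N.+1 0 *+ 2 else 0)
  + ((if (x == y) && (z == w) then X N 1 else 0)
     + (if (x == w) && (y == z) then X N 0 else 0)
     - (if (z == ineg x) && (w == ineg y) then X N 0 else 0)).
Proof.
move=> X0; rewrite /Rop /mul_uv /= !X0.
have -> : Posz N + 1 = Posz N.+1 by rewrite -addn1 PoszD.
rewrite -[(-1 + 1 : int)]/(0 : int) -[(0 + 1 : int)]/(1 : int).
rewrite !sub0r scaler0 subr0 scalerN opprK.
have ifN b (v : A) : (if b then - v else 0) = - (if b then v else 0).
  by case: b; rewrite ?oppr0.
rewrite !ifN opprK !addrA; congr (_ + _ + _); case: ifP => _; rewrite ?addr0 //.
by rewrite opprB addrCA -opprD -mulr2n [LHS]addrC [LHS]addrA [LHS]addrAC.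
Qed.

Lemma prodUV_v1 (x y : ser A) m : prodUV x y m (-1) = 0.
Proof. by rewrite /prodUV andbF. Qed.

Lemma prodVU_v1 (x y : ser A) m : prodVU x y m (-1) = 0.
Proof. by rewrite /prodVU andbF. Qed.

Variable t : 'I_3 -> 'I_3 -> nat -> A.

(* The v^{1}-coefficient of the RTT relation: the commutation relation of a
   first-order generator t^(1)_cd with the series t_ab(u). *)
Lemma RTT_first_order (a b c d : 'I_3) (N : nat) : RTT_rel t ->
  Tser t a b N * t c d 1 + Tser t c b N *+ (a == d)
    - (if c == ineg a then Tser t (ineg d) b N else 0)
  = t c d 1 * Tser t a b N + Tser t a d N *+ (c == b)
    - (if d == ineg b then Tser t a (ineg c) N else 0).
Proof.
pose W := halfF F *: (Tser t a b N *+ (c == d)) - t a b N.+1 *+ (c == d) *+ 2.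
have sumL : \sum_(j < 3) \sum_(l < 3) Rop a j c l (prodUV (Tser t j b) (Tser t l d)) N (-1)
    = W + (Tser t a b N * t c d 1 + Tser t c b N *+ (a == d)
           - (if c == ineg a then Tser t (ineg d) b N else 0)).
  under eq_bigr do under eq_bigr do rewrite (Rop_at_v1 _ _ _ _ _ (prodUV_v1 _ _)).
  under eq_bigr do rewrite big_split sumrB big_split /=.
  rewrite big_split sumrB big_split /=.
  have Pac j l : (a == j) && (c == l) = (j == a) && (l == c).
    by rewrite ![_ == j]eq_sym ![_ == l]eq_sym.
  have Pca j l : (a == l) && (j == c) = (j == c) && (l == a).
    by rewrite andbC [a == l]eq_sym.
  rewrite !(sum2_pick _ Pac) (sum2_pick _ Pca) (sum2_antidiag _ (fun j l => erefl)).
  by rewrite /prodUV /= sum_delta_ineg !mulr_natr.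
have sumR : \sum_(j < 3) \sum_(l < 3) Rop j b l d (prodVU (Tser t c l) (Tser t a j)) N (-1)
    = W + (t c d 1 * Tser t a b N + Tser t a d N *+ (c == b)
           - (if d == ineg b then Tser t a (ineg c) N else 0)).
  under eq_bigr do under eq_bigr do rewrite (Rop_at_v1 _ _ _ _ _ (prodVU_v1 _ _)).
  under eq_bigr do rewrite big_split sumrB big_split /=.
  rewrite big_split sumrB big_split /=.
  have Pdb j l : (j == d) && (b == l) = (j == d) && (l == b) by rewrite [b == l]eq_sym.
  have Panti j l : (l == ineg j) && (d == ineg b) = (d == ineg b) && (l == ineg j).
    exact: andbC.
  rewrite !(sum2_pick _ (fun j l => erefl)) (sum2_pick _ Pdb) (sum2_antidiag _ Panti).
  by rewrite /prodVU /= sum_delta_inegl !mulr_natl.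
by move=> Hrtt; have := Hrtt a b c d N (-1); rewrite sumL sumR => /addrI.
Qed.

Lemma cmt_T_m1_0 (N : nat) : RTT_rel t ->
  cmt (t im1 i0 1) (Tser t im1 i0) N = Tser t im1 ip1 N.
Proof.
move=> Hrtt; have := RTT_first_order im1 i0 im1 i0 N Hrtt.
rewrite ineg_0 ineg_m1 /= mulr0n !addr0 subr0 /cmt => ->.
by rewrite subKr.
Qed.

Lemma cmt_T_m1_m1 (N : nat) : RTT_rel t ->
  cmt (t im1 i0 1) (Tser t im1 im1) N = - Tser t im1 i0 N.
Proof.
move=> Hrtt; have := RTT_first_order im1 im1 im1 i0 N Hrtt.
rewrite ineg_m1 /= mulr0n mulr1n !addr0 !subr0 /cmt => ->.
by rewrite opprD addrA subrr sub0r.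
Qed.

(* The first row of the Gauss decomposition: F(u) is lower unitriangular, so
   t_{-1,b}(u) = k_{-1}(u) e_{-1,b}(u) (with e_{-1,-1}(u) = 1). *)
Lemma gauss_first_row (k : 'I_3 -> ser A) (e f : 'I_3 -> 'I_3 -> ser A) b n :
  gauss t k e f -> Tser t im1 b n = sconv (k im1) (Emat e im1 b) n.
Proof.
case=> _ [_ T_gauss].
have Fm1 c : c != im1 -> sconv (sconv (Fmat f im1 c) (k c)) (Emat e c b) n = 0.
  move=> nc; rewrite (@eq_sconv _ _ _ (fun _ => 0) _ (Emat e c b)) ?sconv0l // => m.
  rewrite (@eq_sconv _ _ _ (fun _ => 0) _ (k c)) ?sconv0l // => j.
  by rewrite /Fmat eq_sym (negbTE nc) ltn0.
rewrite T_gauss (bigD1 im1) //= big1 ?addr0 => [|c /Fm1 //].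
apply: eq_sconv => // m; rewrite -[RHS](sconv1l (k im1)).
by apply: eq_sconv => // j; rewrite /Fmat eqxx.
Qed.

End FirstOrderCommutators.

Theorem lemma3p9 (F : numFieldType) (A : lalgType F)
    (t : 'I_3 -> 'I_3 -> nat -> A) (k : 'I_3 -> nat -> A)
    (e f : 'I_3 -> 'I_3 -> nat -> A) :
  RTT_rel t -> unitary_rel t -> gauss t k e f ->
  forall n : nat,
    e im1 ip1 n
    = e im1 i0 1%N * e im1 i0 n - e im1 i0 n * e im1 i0 1%N
      - sconv (e im1 i0) (e im1 i0) n.
Proof.
move=> Hrtt _ HG n; have [k1 [e0 _]] := HG.
set K := k im1; set E := e im1 i0; set E' := e im1 ip1.
have K0 : K 0%N = 1 := k1 im1.
have T_m1m1 N : Tser t im1 im1 N = K N.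
  by rewrite (gauss_first_row _ _ HG) -(sconv1r K N); exact: eq_sconv.
have T_m10 N : Tser t im1 i0 N = sconv K E N by rewrite (gauss_first_row _ _ HG).
have T_m11 N : Tser t im1 ip1 N = sconv K E' N by rewrite (gauss_first_row _ _ HG).
have x_eq : t im1 i0 1 = E 1%N.
  have [E0 _] : E 0%N = 0 /\ _ := e0 im1 i0 isT.
  rewrite -[LHS]/(Tser t im1 i0 1) T_m10 /sconv !big_ord_recl big_ord0 K0 E0.
  by rewrite mulr0 mul1r !addr0.
have cmtK N : cmt (E 1%N) K N = - sconv K E N.
  by rewrite -x_eq -T_m10 -(cmt_T_m1_m1 N Hrtt) /cmt T_m1m1.
(* Cancel K in  K E' = [x, K] E + K [x, E] = K ([x, E] - E E). *)
apply: (@sconv_cancel _ _ K _ (fun m => cmt (E 1%N) E m - sconv E E m) n K0) => N.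
have cmtKE : sconv K E' N = cmt (E 1%N) (sconv K E) N.
  by rewrite -T_m11 -(cmt_T_m1_0 N Hrtt) /cmt T_m10 x_eq.
rewrite cmtKE cmt_sconv sconvBr sconvA (@eq_sconv _ _ _ _ E E N cmtK) // sconvNl.
by rewrite addrC.
Qed.
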